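(* Let $k$ be a finite field, and let $X,Y$ be the IMOU Calabi--Yau threefolds over $k$ (described in the context). Then $X$ and $Y$ have the same zeta function.
   Context: IMOU construction over $k$. Let $G_2$ be the split group of type $G_2$, with $Q=G_2/P_1$ (the smooth $5$-dimensional quadric), $G=G_2/P_2$ (the $G_2$-Grassmannian) and $F=G_2/B$. The natural $\mathbb P^1$-bundles are $\pi\colon F\to Q$ and $\rho\colon F\to G$. For a general section $s$ of $\pi^*\mathcal O_Q(1)\otimes\rho^*\mathcal O_G(1)$ with zero locus $M$, put \[ X=\{x\in Q:\pi^{-1}(x)\subset M\},\qquad Y=\{y\in G:\rho^{-1}(y)\subset M\}. \] These are smooth Calabi--Yau threefolds, and $M$ is simultaneously the blow-up of $Q$ along $X$ and the blow-up of $G$ along $Y$. *)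

From HB Require Import structures.
From mathcomp Require Import all_boot all_order all_algebra.
Set Implicit Arguments. Unset Strict Implicit. Unset Printing Implicit Defensive.
Import Order.TTheory GRing.Theory Num.Theory.
Local Open Scope ring_scope.

(* Split octonions (Zorn vector matrices), used to model the split G2.
   A vector x : 'rV[L]_8 encodes (a, u, v, b) with a = x_0, u = (x_1,x_2,x_3),
   v = (x_4,x_5,x_6), b = x_7.  Product:
   (a,u,v,b)(a',u',v',b') = (aa' + u.v', a u' + b' u - v x v',
                             a' v + b v' + u x u', v.u' + b b').  This is the split Cayley algebra over
   any field; G2 = Aut of it. *)
Section Oct.
Variable L : finFieldType.

Definition oc (x : 'rV[L]_8) (n : nat) : L := x ord0 (inord n).

Definition cross3 (p q : nat -> L) (i : nat) : L :=
  match i with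
  | 0 => p 1%N * q 2%N - p 2%N * q 1%N
  | 1 => p 2%N * q 0%N - p 0%N * q 2%N
  | _ => p 0%N * q 1%N - p 1%N * q 0%N
  end.

Definition omul_coord (x y : 'rV[L]_8) (k : nat) : L :=
  let a := oc x 0 in let b := oc x 7 in
  let u := fun i => oc x (1 + i) in let v := fun i => oc x (4 + i) in
  let a' := oc y 0 in let b' := oc y 7 in
  let u' := fun i => oc y (1 + i) in let v' := fun i => oc y (4 + i) in
  match k with
  | 0 => a * a' + (u 0%N * v' 0%N + u 1%N * v' 1%N + u 2%N * v' 2%N)
  | 1 | 2 | 3 => a * u' (k - 1)%N + b' * u (k - 1)%N - cross3 v v' (k - 1)%N
  | 4 | 5 | 6 => a' * v (k - 4)%N + b * v' (k - 4)%N + cross3 u u' (k - 4)%N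
  | _ => (v 0%N * u' 0%N + v 1%N * u' 1%N + v 2%N * u' 2%N) + b * b'
  end.

Definition omul (x y : 'rV[L]_8) : 'rV[L]_8 := \row_(k < 8) omul_coord x y k.

Definition onorm (x : 'rV[L]_8) : L :=
  oc x 0 * oc x 7 - (oc x 1 * oc x 4 + oc x 2 * oc x 5 + oc x 3 * oc x 6).

Definition otr (x : 'rV[L]_8) : L := oc x 0 + oc x 7.

(* Q = G2/P1 (5-dim quadric): points <x> with T(x) = 0 and N(x) = 0
   (points of the split Cayley hexagon). *)
Definition Qpt (x : 'rV[L]_8) : bool :=
  [&& x != 0, otr x == 0 & onorm x == 0].

(* G = G2/P2: 2-planes W = rowspace A of trace-zero octonions with W.W = 0
   (lines of the split Cayley hexagon). *)
Definition Gln (A : 'M[L]_(2, 8)) : bool :=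
  let w1 := row ord0 A in let w2 := row ord_max A in
  [&& \rank A == 2%N, otr w1 == 0, otr w2 == 0,
      omul w1 w1 == 0, omul w1 w2 == 0, omul w2 w1 == 0 & omul w2 w2 == 0].

(* A section of pi^* O_Q(1) (x) rho^* O_G(1): a form linear in the
   coordinates of x and linear in the Pluecker coordinates w1 /\ w2 of W,
   with coefficients c. *)
Definition sec_eval (c : 'I_8 -> 'I_8 -> 'I_8 -> L) (x w1 w2 : 'rV[L]_8) : L :=
  \sum_(i < 8) \sum_(j < 8) \sum_(l < 8)
     c i j l * (x ord0 i * (w1 ord0 j * w2 ord0 l - w1 ord0 l * w2 ord0 j)).

(* X = { x in Q : pi^{-1}(x) subset M }: every line W of G through x has
   s(x, W) = 0. *)
Definition Xcond (c : 'I_8 -> 'I_8 -> 'I_8 -> L) (x : 'rV[L]_8) : bool :=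
  Qpt x && [forall A : 'M[L]_(2, 8),
              (Gln A && (x <= A)%MS) ==> (sec_eval c x (row ord0 A) (row ord_max A) == 0)].

(* Y = { W in G : rho^{-1}(W) subset M }: every point x of P(W) has
   s(x, W) = 0. *)
Definition Ycond (c : 'I_8 -> 'I_8 -> 'I_8 -> L) (A : 'M[L]_(2, 8)) : bool :=
  Gln A && [forall x : 'rV[L]_8,
              ((x != 0) && (x <= A)%MS) ==> (sec_eval c x (row ord0 A) (row ord_max A) == 0)].

End Oct.

(* L-rational points of X and Y, as sets of subspaces (represented by the
   canonical matrix <<_>>%MS of their row space). *)
Definition Xpts (L : finFieldType) (c : 'I_8 -> 'I_8 -> 'I_8 -> L) : {set 'M[L]_8} :=
  [set (<<x>>%MS : 'M[L]_8) | x : 'rV[L]_8 & Xcond c x].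

Definition Ypts (L : finFieldType) (c : 'I_8 -> 'I_8 -> 'I_8 -> L) : {set 'M[L]_8} :=
  [set (<<A>>%MS : 'M[L]_8) | A : 'M[L]_(2, 8) & Ycond c A].

(* Two k-varieties have the same zeta function iff they have the same number
   of points over every finite extension L of k (the zeta function being
   exp (sum_n N_n t^n / n)). *)
Definition same_zeta (k : finFieldType)
  (NX NY : forall L : finFieldType, {rmorphism k -> L} -> nat) : Prop :=
  forall (L : finFieldType) (f : {rmorphism k -> L}), NX L f = NY L f.

(* Let M be the set of flags (p, l), with p a point of Q and l a line of G through p,
   at which s vanishes.  The lines through a fixed p form a P^1 on which s is a linear
   form, so it vanishes on all q + 1 of them if p is in X and on exactly one otherwise;
   dually for the points of a fixed line and Y.  Over F_q this gives
   |M| = |Q| + q |X| = |G| + q |Y|, and |Q| = |G| = |F| / (q + 1), hence |X| = |Y|.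
   Points and lines are counted through spanning vectors and bases, which scales these
   identities by the orders of GL_1 and GL_2.  The pencil of lines through a point is
   written down explicitly when the coordinate u_1 is nonzero and transported to every
   other point by automorphisms of the split octonions. *)

From HB Require Import structures.
From mathcomp Require Import all_boot all_order all_algebra.
From mathcomp Require Import ring.
Set Implicit Arguments. Unset Strict Implicit. Unset Printing Implicit Defensive.
Import GRing.Theory.

Lemma card_dep_pairs (T1 T2 : finType) (P : T1 -> T2 -> bool) :
  #|[set p : T1 * T2 | P p.1 p.2]| = \sum_(x : T1) #|[set y | P x y]|.
Proof.
rewrite -sum1_card (eq_bigl (fun p : T1 * T2 => predT p.1 && P p.1 p.2)) => [|p].
  rewrite -(pair_big_dep predT P (fun _ _ => 1%N)).
  by apply: eq_bigr => x _; rewrite -sum1dep_card.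
by rewrite inE.
Qed.

Lemma sum_card_indicator (T : finType) (A B : {set T}) (d n : nat) :
  B \subset A -> \sum_(x in A) d * (1 + n * (x \in B)) = d * (#|A| + n * #|B|).
Proof.
move=> sBA; rewrite -big_distrr /= big_split /= sum1_card -big_distrr /=.
congr (d * (_ + n * _)); rewrite -sum1_card big_mkcond [RHS]big_mkcond /=.
apply: eq_bigr => x _; case: ifP => [_|/negbT Ax]; first by case: (x \in B).
by rewrite (contraNF (subsetP sBA x) Ax).
Qed.

Local Open Scope ring_scope.

Section LinearForm2.
Variable F : finFieldType.
Local Notation q := #|F|.

Definition kernel2 (s1 s2 : F) := [set p : F * F | p.1 * s1 + p.2 * s2 == 0].

Lemma card_kernel2 (s1 s2 : F) :
  #|kernel2 s1 s2| = if (s1 == 0) && (s2 == 0) then (q * q)%N else q.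
Proof.
have [s2_0|s2_neq0] := eqVneq s2 0; last first.
  have -> : kernel2 s1 s2 = [set (b, - (b * s1) / s2) | b in [set: F]].
    apply/setP => -[b g]; rewrite !inE /=.
    apply/eqP/imsetP => [E | [b' _ [-> ->]]]; last by rewrite mulfVK //; ring.
    exists b; rewrite ?inE //; congr (_, _); apply: (mulIf s2_neq0).
    by rewrite mulfVK //; apply/eqP; rewrite -addr_eq0 addrC E.
  by rewrite andbF card_imset ?cardsT // => b b' [].
have [s1_0|s1_neq0] := eqVneq s1 0.
  rewrite s1_0 s2_0 -card_prod; apply: eq_card => p.
  by rewrite !inE !mulr0 addr0 eqxx.
have -> : kernel2 s1 s2 = [set (0, g) | g in [set: F]].
  apply/setP => -[b g]; rewrite !inE /= s2_0 mulr0 addr0.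
  rewrite mulf_eq0 (negPf s1_neq0) orbF.
  by apply/eqP/imsetP => [-> | [g' _ [-> _]] //]; exists g.
by rewrite card_imset ?cardsT // => g g' [].
Qed.

Lemma card_kernel2_nonzero (s1 s2 : F) :
  #|kernel2 s1 s2 :\ (0, 0)| = (q.-1 * (1 + q * ((s1 == 0) && (s2 == 0))%R))%N.
Proof.
have k0 : ((0, 0) : F * F) \in kernel2 s1 s2 by rewrite inE !mul0r addr0.
have := cardsD1 (0, 0) (kernel2 s1 s2); rewrite k0 /= add1n card_kernel2 => Ek.
have q_gt0 : (0 < q)%N by apply/card_gt0P; exists 0.
apply: succn_inj; rewrite -Ek.
by case: (_ && _); rewrite /= ?muln1 ?muln0; case: #|F| q_gt0 => // n _; ring.
Qed.

End LinearForm2.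

Lemma det_mx22 (R : comNzRingType) (g : 'M[R]_2) : \det g = g 0 0 * g 1 1 - g 0 1 * g 1 0.
Proof.
rewrite (expand_det_row _ 0) !big_ord_recl big_ord0 addr0 /cofactor !det_mx11 !mxE /=.
rewrite expr0 expr1 mul1r mulN1r mulrN.
by congr (g _ _ * g _ _ - g _ _ * g _ _); apply: val_inj.
Qed.

Section FiniteGL.
Variable F : finFieldType.
Local Notation q := #|F|.

Lemma card_GL1 : #|[set g : 'M[F]_1 | g \in unitmx]| = q.-1.
Proof.
have inj : injective (fun a : F => (a%:M : 'M[F]_1)).
  by apply: (can_inj (g := fun g : 'M[F]_1 => g 0 0)) => a; rewrite mxE eqxx mulr1n.
rewrite -(cardC1 (0 : F)) -(card_imset _ inj); apply: eq_card => g; rewrite !inE.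
rewrite unitmxE det_mx11 unitfE; apply/idP/imsetP => [g00 | [a]].
  by exists (g 0 0); rewrite ?inE // {1}[g]mx11_scalar.
by rewrite !inE => a_neq0 ->; rewrite mxE eqxx mulr1n.
Qed.

Lemma sum_card_unit_translates m n (I : {set 'M[F]_(m, n)}) :
  (\sum_(A : 'M[F]_(m, n)) #|[set g : 'M[F]_m | (g \in unitmx) && (g *m A \in I)]| =
   #|[set g : 'M[F]_m | g \in unitmx]| * #|I|)%N.
Proof.
under eq_bigr => A _ do rewrite -sum1dep_card big_mkcond.
rewrite exchange_big -sum_nat_const [RHS]big_mkcond /=; apply: eq_bigr => g _.
rewrite inE; case: (boolP (g \in unitmx)) => [g_unit|_] /=; last by rewrite big1.
rewrite -big_mkcond sum1dep_card -(card_preimset I (can_inj (mulKmx g_unit))).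
by apply: eq_card => A; rewrite !inE.
Qed.

Lemma card_row_free_GL_stable m n (P : pred 'M[F]_(m, n)) :
  (forall A, P A -> row_free A) ->
  (forall A g, g \in unitmx -> P A -> P (g *m A)) ->
  #|[set A | P A]| = (#|[set g : 'M[F]_m | g \in unitmx]| *
                      #|[set (<<A>>%MS : 'M[F]_n) | A in [set A | P A]]|)%N.
Proof.
move=> P_free P_stable.
rewrite -sum1_card (partition_big_imset (fun A : 'M[F]_(m, n) => (<<A>>%MS : 'M[F]_n))) /=.
rewrite mulnC -sum_nat_const; apply: eq_bigr => _ /imsetP [A0 PA0 ->].
rewrite inE in PA0; rewrite sum1dep_card -(card_imset _ (row_free_inj (P_free _ PA0))).
apply: eq_card => A; rewrite !inE; apply/andP/imsetP.
  by move=> [PA /eqP /genmxP /eqmxMunitP [g g_unit ->]]; exists g; rewrite ?inE.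
move=> [g]; rewrite inE => g_unit ->; split; first exact: P_stable.
by apply/eqP/genmxP/eqmxMunitP; exists g.
Qed.

Definition mx22 (p : (F * F) * (F * F)) : 'M[F]_2 :=
  \matrix_(i, j) if i == 0 then (if j == 0 then p.1.1 else p.1.2)
                 else (if j == 0 then p.2.1 else p.2.2).

Lemma card_mx22 (P : pred 'M[F]_2) : #|[set g | P g]| = #|[set p | P (mx22 p)]|.
Proof.
have mx22K : cancel mx22 (fun g => ((g 0 0, g 0 1), (g 1 0, g 1 1))).
  by move=> [[a b] [d e]]; rewrite !mxE.
have mx22_eta (g : 'M[F]_2) : g = mx22 ((g 0 0, g 0 1), (g 1 0, g 1 1)).
  apply/matrixP => -[[|[|//]] ?] [[|[|//]] ?]; rewrite !mxE /=;
    by congr (g _ _); apply: val_inj.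
rewrite -(card_imset _ (can_inj mx22K)); apply: eq_card => g; rewrite inE.
apply/idP/imsetP => [Pg | [p]]; last by rewrite inE => + ->.
by exists ((g 0 0, g 0 1), (g 1 0, g 1 1)); rewrite ?inE -?mx22_eta.
Qed.

Lemma card_second_rows (r : F * F) : r != (0, 0) ->
  #|[set s : F * F | r.1 * s.2 - r.2 * s.1 != 0]| = (q * q.-1)%N.
Proof.
move=> r_neq0; have -> : [set s : F * F | r.1 * s.2 - r.2 * s.1 != 0] = ~: kernel2 (- r.2) r.1.
  by apply/setP => s; rewrite !inE mulrN (mulrC s.1) (mulrC s.2) addrC.
apply/eqP; rewrite -(eqn_add2l #|kernel2 (- r.2) r.1|) cardsC card_kernel2 card_prod.
have -> : (- r.2 == 0) && (r.1 == 0) = false.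
  by move: r_neq0; rewrite oppr_eq0; apply: contraNF => /andP [/eqP b0 /eqP a0];
    case: r a0 b0 => a b /= -> ->.
have q_gt0 : (0 < q)%N by apply/card_gt0P; exists 0.
by case: #|F| q_gt0 => // n _; rewrite mulnS.
Qed.

Lemma card_GL2_first_row (a b : F) :
  #|[set g : 'M[F]_2 | (g \in unitmx) && (g 0 0 * a + g 0 1 * b == 0)]| =
  (q * q.-1 * #|kernel2 a b :\ (0, 0)%R|)%N.
Proof.
rewrite card_mx22 (eq_card (B := [set p : (F * F) * (F * F) |
   (p.1 \in kernel2 a b :\ (0, 0)) && (p.1.1 * p.2.2 - p.1.2 * p.2.1 != 0)])); last first.
  move=> [[r1 r2] [s1 s2]]; rewrite !inE unitmxE unitfE det_mx22 !mxE /= andbC.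
  by case: ((r1, r2) =P (0, 0)) => [[-> ->]|_]; rewrite ?mul0r ?subrr ?eqxx ?andbF.
rewrite (card_dep_pairs (fun r s => (r \in kernel2 a b :\ (0, 0)) &&
                                    (r.1 * s.2 - r.2 * s.1 != 0))).
rewrite mulnC -sum_nat_const [RHS]big_mkcond /=; apply: eq_bigr => r _.
case: ifP => [/setD1P [r_neq0 _]|_].
  by rewrite -(card_second_rows r_neq0); apply: eq_card => s; rewrite !inE.
by apply/eqP; rewrite cards_eq0; apply/eqP/setP => s; rewrite !inE.
Qed.

Lemma card_GL2 : #|[set g : 'M[F]_2 | g \in unitmx]| = (q * q.-1 * (q.-1 * (1 + q)))%N.
Proof.
have := card_GL2_first_row 0 0; rewrite card_kernel2_nonzero eqxx /= muln1 => <-.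
by apply: eq_card => g; rewrite !inE !mulr0 addr0 eqxx andbT.
Qed.

End FiniteGL.

Section OctonionCoordinates.
Variable L : finFieldType.

Definition mk8 (a0 a1 a2 a3 a4 a5 a6 a7 : L) : 'rV[L]_8 :=
  \row_(i < 8) nth 0 [:: a0; a1; a2; a3; a4; a5; a6; a7] i.

Lemma mk8_oc (x : 'rV[L]_8) :
  x = mk8 (oc x 0) (oc x 1) (oc x 2) (oc x 3) (oc x 4) (oc x 5) (oc x 6) (oc x 7).
Proof.
apply/rowP => i; rewrite mxE /oc.
by case: i => [[|[|[|[|[|[|[|[|//]]]]]]]] ?] /=; congr (x _ _); apply: val_inj; rewrite /= inordK.
Qed.

Lemma oc_mk8 a0 a1 a2 a3 a4 a5 a6 a7 (n : nat) : (n < 8)%N ->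
  oc (mk8 a0 a1 a2 a3 a4 a5 a6 a7) n = nth 0 [:: a0; a1; a2; a3; a4; a5; a6; a7] n.
Proof. by move=> n_lt8; rewrite /oc !mxE inordK. Qed.

Lemma mk8_inj a0 a1 a2 a3 a4 a5 a6 a7 b0 b1 b2 b3 b4 b5 b6 b7 :
  mk8 a0 a1 a2 a3 a4 a5 a6 a7 = mk8 b0 b1 b2 b3 b4 b5 b6 b7 ->
  [/\ a0 = b0, a1 = b1, a2 = b2, a3 = b3 & [/\ a4 = b4, a5 = b5, a6 = b6 & a7 = b7]].
Proof.
move=> E; have coord n : (n < 8)%N -> nth 0 [:: a0; a1; a2; a3; a4; a5; a6; a7] n =
                                     nth 0 [:: b0; b1; b2; b3; b4; b5; b6; b7] n.
  by move=> n_lt8; rewrite -!oc_mk8 // E.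
by split; [exact: (coord 0%N) | exact: (coord 1%N) | exact: (coord 2%N) | exact: (coord 3%N) |
  split; [exact: (coord 4%N) | exact: (coord 5%N) | exact: (coord 6%N) | exact: (coord 7%N)]].
Qed.

Lemma mk8_0 : (0 : 'rV[L]_8) = mk8 0 0 0 0 0 0 0 0.
Proof. by apply/rowP => -[[|[|[|[|[|[|[|[|//]]]]]]]] ?]; rewrite !mxE. Qed.

Lemma add_mk8 a0 a1 a2 a3 a4 a5 a6 a7 b0 b1 b2 b3 b4 b5 b6 b7 :
  mk8 a0 a1 a2 a3 a4 a5 a6 a7 + mk8 b0 b1 b2 b3 b4 b5 b6 b7 =
  mk8 (a0 + b0) (a1 + b1) (a2 + b2) (a3 + b3) (a4 + b4) (a5 + b5) (a6 + b6) (a7 + b7).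
Proof. by apply/rowP => -[[|[|[|[|[|[|[|[|//]]]]]]]] ?]; rewrite !mxE. Qed.

Lemma scale_mk8 (a : L) a0 a1 a2 a3 a4 a5 a6 a7 :
  a *: mk8 a0 a1 a2 a3 a4 a5 a6 a7 =
  mk8 (a * a0) (a * a1) (a * a2) (a * a3) (a * a4) (a * a5) (a * a6) (a * a7).
Proof. by apply/rowP => -[[|[|[|[|[|[|[|[|//]]]]]]]] ?]; rewrite !mxE. Qed.

Lemma opp_mk8 a0 a1 a2 a3 a4 a5 a6 a7 :
  - mk8 a0 a1 a2 a3 a4 a5 a6 a7 = mk8 (- a0) (- a1) (- a2) (- a3) (- a4) (- a5) (- a6) (- a7).
Proof. by apply/rowP => -[[|[|[|[|[|[|[|[|//]]]]]]]] ?]; rewrite !mxE. Qed.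

Lemma omul_mk8 a0 a1 a2 a3 a4 a5 a6 a7 b0 b1 b2 b3 b4 b5 b6 b7 :
  omul (mk8 a0 a1 a2 a3 a4 a5 a6 a7) (mk8 b0 b1 b2 b3 b4 b5 b6 b7) =
  mk8 (a0 * b0 + (a1 * b4 + a2 * b5 + a3 * b6))
      (a0 * b1 + b7 * a1 - (a5 * b6 - a6 * b5))
      (a0 * b2 + b7 * a2 - (a6 * b4 - a4 * b6))
      (a0 * b3 + b7 * a3 - (a4 * b5 - a5 * b4))
      (b0 * a4 + a7 * b4 + (a2 * b3 - a3 * b2))
      (b0 * a5 + a7 * b5 + (a3 * b1 - a1 * b3))
      (b0 * a6 + a7 * b6 + (a1 * b2 - a2 * b1))
      ((a4 * b1 + a5 * b2 + a6 * b3) + a7 * b7).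
Proof.
by apply/rowP => -[[|[|[|[|[|[|[|[|//]]]]]]]] ?]; rewrite !mxE /omul_coord /cross3 /= !oc_mk8.
Qed.

Lemma otr_mk8 a0 a1 a2 a3 a4 a5 a6 a7 : otr (mk8 a0 a1 a2 a3 a4 a5 a6 a7) = a0 + a7.
Proof. by rewrite /otr !oc_mk8. Qed.

Lemma onorm_mk8 a0 a1 a2 a3 a4 a5 a6 a7 :
  onorm (mk8 a0 a1 a2 a3 a4 a5 a6 a7) = a0 * a7 - (a1 * a4 + a2 * a5 + a3 * a6).
Proof. by rewrite /onorm !oc_mk8. Qed.

End OctonionCoordinates.

Section OctonionAlgebra.
Variable L : finFieldType.
Implicit Types (a b : L) (x y z w : 'rV[L]_8).

Lemma omul_linearl a b x y z : omul (a *: x + b *: y) z = a *: omul x z + b *: omul y z.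
Proof.
by rewrite [x]mk8_oc [y]mk8_oc [z]mk8_oc !(scale_mk8, add_mk8, omul_mk8); congr mk8; ring.
Qed.

Lemma omul_linearr a b x y z : omul z (a *: x + b *: y) = a *: omul z x + b *: omul z y.
Proof.
by rewrite [x]mk8_oc [y]mk8_oc [z]mk8_oc !(scale_mk8, add_mk8, omul_mk8); congr mk8; ring.
Qed.

Lemma otr_linear a b x y : otr (a *: x + b *: y) = a * otr x + b * otr y.
Proof. by rewrite [x]mk8_oc [y]mk8_oc !(scale_mk8, add_mk8, otr_mk8); ring. Qed.

Lemma otrZ a x : otr (a *: x) = a * otr x.
Proof. by rewrite [x]mk8_oc scale_mk8 !otr_mk8; ring. Qed.

Lemma onormZ a x : onorm (a *: x) = a ^+ 2 * onorm x.
Proof. by rewrite [x]mk8_oc scale_mk8 !onorm_mk8; ring. Qed.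

Lemma oc_linear a b x y n : oc (a *: x + b *: y) n = a * oc x n + b * oc y n.
Proof. by rewrite /oc !mxE. Qed.

Lemma ocB x y n : oc (x - y) n = oc x n - oc y n.
Proof. by rewrite /oc !mxE. Qed.

Lemma otrB x y : otr (x - y) = otr x - otr y.
Proof. by rewrite /otr !ocB; ring. Qed.

Lemma omulBr x y z : omul z (x - y) = omul z x - omul z y.
Proof.
by rewrite [x]mk8_oc [y]mk8_oc [z]mk8_oc !(opp_mk8, add_mk8, omul_mk8); congr mk8; ring.
Qed.

Lemma otr_eq0 x : otr x = 0 -> oc x 7 = - oc x 0.
Proof. by rewrite /otr => /eqP; rewrite addrC addr_eq0 => /eqP. Qed.

Lemma omul_sqr_eq0 z : otr z = 0 -> (omul z z = 0 <-> onorm z = 0).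
Proof.
move/otr_eq0; rewrite [z]mk8_oc omul_mk8 onorm_mk8 mk8_0 !oc_mk8 //= => ->.
split => [/mk8_inj [E0 _ _ _ _] | N0]; first by rewrite -[RHS]oppr0 -E0; ring.
by congr mk8; first [ring | rewrite -N0; ring | rewrite -[RHS]oppr0 -N0; ring].
Qed.

Lemma omul_eq0_sym z w : otr z = 0 -> otr w = 0 -> omul w z = 0 -> omul z w = 0.
Proof.
move=> /otr_eq0 z7 /otr_eq0 w7; rewrite [z]mk8_oc [w]mk8_oc z7 w7 !omul_mk8 mk8_0.
move=> /mk8_inj [E0 E1 E2 E3 [E4 E5 E6 E7]].
congr mk8.
- by rewrite -E7; ring.
- by rewrite -[RHS]oppr0 -E1; ring.
- by rewrite -[RHS]oppr0 -E2; ring.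
- by rewrite -[RHS]oppr0 -E3; ring.
- by rewrite -[RHS]oppr0 -E4; ring.
- by rewrite -[RHS]oppr0 -E5; ring.
- by rewrite -[RHS]oppr0 -E6; ring.
- by rewrite -E0; ring.
Qed.

End OctonionAlgebra.

Section HexagonLines.
Variable L : finFieldType.
Implicit Types (a b d e : L) (x y z w : 'rV[L]_8).

Definition mk2 z w : 'M[L]_(2, 8) := \matrix_(i, j) if i == ord0 then z 0 j else w 0 j.

Lemma row0_mk2 z w : row ord0 (mk2 z w) = z.
Proof. by apply/rowP => j; rewrite !mxE. Qed.

Lemma row1_mk2 z w : row ord_max (mk2 z w) = w.
Proof. by apply/rowP => j; rewrite !mxE. Qed.

Lemma mk2_rows (A : 'M[L]_(2, 8)) : A = mk2 (row ord0 A) (row ord_max A).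
Proof.
apply/matrixP => i j; rewrite !mxE.
by case: i => [[|[|//]] ?]; congr (A _ _); apply: val_inj.
Qed.

Lemma mulmx_mk2 (u : 'rV[L]_2) z w : u *m mk2 z w = u 0 0 *: z + u 0 1 *: w.
Proof.
apply/rowP => j; rewrite !mxE !big_ord_recr big_ord0 /= add0r !mxE /=.
by congr (u _ _ * _ + u _ _ * _); apply: val_inj.
Qed.

Lemma row0_mul2 (g : 'M[L]_2) (A : 'M[L]_(2, 8)) :
  row ord0 (g *m A) = g 0 0 *: row ord0 A + g 0 1 *: row ord_max A.
Proof. by rewrite row_mul {1}(mk2_rows A) mulmx_mk2 !mxE. Qed.

Lemma row1_mul2 (g : 'M[L]_2) (A : 'M[L]_(2, 8)) :
  row ord_max (g *m A) = g 1 0 *: row ord0 A + g 1 1 *: row ord_max A.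
Proof.
rewrite row_mul {1}(mk2_rows A) mulmx_mk2 !mxE.
by congr (g _ _ *: _ + g _ _ *: _); apply: val_inj.
Qed.

Definition indep2 z w := forall a b, a *: z + b *: w = 0 -> a = 0 /\ b = 0.

Lemma row_free_mk2 z w : row_free (mk2 z w) <-> indep2 z w.
Proof.
split=> [z_w_free a b E | z_w_indep].
  pose u : 'rV[L]_2 := \row_j if j == 0 then a else b.
  have : u *m mk2 z w = 0 *m mk2 z w by rewrite mul0mx mulmx_mk2 !mxE.
  by move/(row_free_inj z_w_free)/rowP => u0; move: (u0 0) (u0 1); rewrite !mxE.
apply/negPn/negP; rewrite -kermx_eq0 => /rowV0Pn [v /sub_kermxP].
rewrite mulmx_mk2 => /z_w_indep [v0 v1] /negP; apply; apply/eqP/rowP => -[[|[|//]] ?].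
  by rewrite mxE -v0; congr (v _ _); apply: val_inj.
by rewrite mxE -v1; congr (v _ _); apply: val_inj.
Qed.

Lemma indep2_neq0 z w : indep2 z w -> z != 0.
Proof.
move=> z_w_indep; apply/eqP => z0.
by have [] := z_w_indep 1 0; rewrite ?z0 ?scaler0 ?scale0r ?addr0 // => /eqP; rewrite oner_eq0.
Qed.

Lemma indep2_sym z w : indep2 z w -> indep2 w z.
Proof. by move=> z_w_indep a b; rewrite addrC => /z_w_indep []. Qed.

Lemma indep2_comb z w a b d e : indep2 z w -> a * e - b * d != 0 ->
  indep2 (a *: z + b *: w) (d *: z + e *: w).
Proof.
move=> z_w_indep det_neq0 p r E.
have /z_w_indep [E1 E2] : (p * a + r * d) *: z + (p * b + r * e) *: w = 0.
  by rewrite -E !scalerDr !scalerA !scalerDl addrACA.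
have cancel_det s : s * (a * e - b * d) = 0 -> s = 0.
  by move/eqP; rewrite mulf_eq0 (negPf det_neq0) orbF => /eqP.
split; apply: cancel_det.
  have -> : p * (a * e - b * d) = e * (p * a + r * d) - d * (p * b + r * e) by ring.
  by rewrite E1 E2; ring.
have -> : r * (a * e - b * d) = a * (p * b + r * e) - b * (p * a + r * d) by ring.
by rewrite E1 E2; ring.
Qed.

Lemma GlnE z w : Gln (mk2 z w) <->
  [/\ indep2 z w, otr z = 0, otr w = 0 &
   [/\ omul z z = 0, omul z w = 0, omul w z = 0 & omul w w = 0]].
Proof.
rewrite /Gln row0_mk2 row1_mk2 -/(row_free (mk2 z w)).
split=> [| [/row_free_mk2 -> -> -> [-> -> -> ->]]]; last by rewrite !eqxx.
by case/and5P => /row_free_mk2 ? /eqP ? /eqP ? /eqP ? /and3P [/eqP ? /eqP ? /eqP ?].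
Qed.

Lemma GlnE_norm z w : Gln (mk2 z w) <->
  [/\ indep2 z w, otr z = 0, otr w = 0 & [/\ onorm z = 0, onorm w = 0 & omul z w = 0]].
Proof.
rewrite GlnE; split=> [[? tz tw [zz zw _ ww]] | [? tz tw [nz nw zw]]].
  by split=> //; split=> //; apply/omul_sqr_eq0.
split=> //; split=> //; try exact/omul_sqr_eq0.
exact: omul_eq0_sym.
Qed.

Lemma Gln_comb z w a b d e : Gln (mk2 z w) -> a * e - b * d != 0 ->
  Gln (mk2 (a *: z + b *: w) (d *: z + e *: w)).
Proof.
move=> /GlnE [z_w_indep tz tw [zz zw wz ww]] det_neq0; apply/GlnE; split.
- exact: indep2_comb.
- by rewrite otr_linear tz tw !mulr0 addr0.
- by rewrite otr_linear tz tw !mulr0 addr0.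
by split; rewrite omul_linearl !omul_linearr zz zw wz ww !(scaler0, addr0).
Qed.

Lemma Gln_mul_unit (g : 'M[L]_2) A : g \in unitmx -> Gln A -> Gln (g *m A).
Proof.
rewrite unitmxE unitfE det_mx22 (mk2_rows (g *m A)) row0_mul2 row1_mul2 {1}(mk2_rows A).
by move=> det_neq0 GA; apply: Gln_comb.
Qed.

Lemma Gln_Qpt z w : Gln (mk2 z w) -> Qpt z.
Proof.
by case/GlnE_norm => /indep2_neq0 z_neq0 tz _ [nz _ _]; rewrite /Qpt z_neq0 tz nz !eqxx.
Qed.

End HexagonLines.

Section NullPencil.
Variable L : finFieldType.
Implicit Types (x y z w : 'rV[L]_8).

Definition pcomb z y1 y2 (t : L * (L * L)) := t.1 *: z + t.2.1 *: y1 + t.2.2 *: y2.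

(* The planes <z, w> with w in span(z, y1, y2) \ <z> are then the lines of G through <z>. *)
Definition pencil z y1 y2 : Prop :=
  [/\ forall t, [/\ otr (pcomb z y1 y2 t) = 0, onorm (pcomb z y1 y2 t) = 0
                  & omul z (pcomb z y1 y2 t) = 0],
      forall w, otr w = 0 -> omul z w = 0 -> exists t, w = pcomb z y1 y2 t
    & injective (pcomb z y1 y2)].

Lemma annihilator_u1_eq0 z d : oc z 1 != 0 -> otr d = 0 -> omul z d = 0 ->
  oc d 1 = 0 -> oc d 5 = 0 -> oc d 6 = 0 -> d = 0.
Proof.
move=> u1_neq0 /otr_eq0 d7 zd d1 d5 d6; rewrite [d]mk8_oc d1 d5 d6 d7 in zd *.
move: zd; rewrite [z]mk8_oc omul_mk8 mk8_0 => /mk8_inj [E0 E1 _ _ [_ E5 E6 _]].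
have cancel_u1 s : s * oc z 1 = 0 -> s = 0.
  by move/eqP; rewrite mulf_eq0 (negPf u1_neq0) orbF => /eqP.
have d0 : oc d 0 = 0 by apply: cancel_u1; rewrite -[RHS]oppr0 -E1; ring.
have d3 : oc d 3 = 0 by apply: cancel_u1; rewrite -[RHS]oppr0 -E5 d0; ring.
have d2 : oc d 2 = 0 by apply: cancel_u1; rewrite -E6 d0; ring.
have d4 : oc d 4 = 0 by apply: cancel_u1; rewrite -E0 d0; ring.
by rewrite d0 d2 d3 d4 oppr0.
Qed.

Lemma pencil_u1 (a u1 u2 u3 v2 v3 : L) : u1 != 0 -> exists y1 y2,
  pencil (mk8 a u1 u2 u3 ((- a ^+ 2 - u2 * v2 - u3 * v3) / u1) v2 v3 (- a)) y1 y2.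
Proof.
move=> u1_neq0; set z := mk8 _ _ _ _ _ _ _ _.
(* y1, y2 span the w with tr w = 0, z w = 0 and w_1 = 0. *)
exists (mk8 (- (u1 * v2)) 0 (u1 * a + v2 * v3) (- v2 ^+ 2)
            (a * v2 - u1 * u3) 0 (u1 ^+ 2) (u1 * v2)).
exists (mk8 (- (u1 * v3)) 0 (v3 ^+ 2) (u1 * a - v2 * v3)
            (u1 * u2 + a * v3) (- u1 ^+ 2) 0 (u1 * v3)).
set y1 := mk8 _ _ _ _ _ _ _ _; set y2 := mk8 _ _ _ _ _ _ _ _.
have pcombE t : pcomb z y1 y2 t = mk8
    (t.1 * a - t.2.1 * (u1 * v2) - t.2.2 * (u1 * v3)) (t.1 * u1)
    (t.1 * u2 + t.2.1 * (u1 * a + v2 * v3) + t.2.2 * v3 ^+ 2)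
    (t.1 * u3 - t.2.1 * v2 ^+ 2 + t.2.2 * (u1 * a - v2 * v3))
    (t.1 * ((- a ^+ 2 - u2 * v2 - u3 * v3) / u1) + t.2.1 * (a * v2 - u1 * u3) +
       t.2.2 * (u1 * u2 + a * v3))
    (t.1 * v2 - t.2.2 * u1 ^+ 2) (t.1 * v3 + t.2.1 * u1 ^+ 2)
    (- t.1 * a + t.2.1 * (u1 * v2) + t.2.2 * (u1 * v3)).
  by rewrite /pcomb !scale_mk8 !add_mk8; congr mk8; ring.
have cancel_u1 n s s' : s * u1 ^+ n = s' * u1 ^+ n -> s = s'.
  by apply: mulIf; rewrite expf_eq0 negb_and u1_neq0 orbT.
have null t : [/\ otr (pcomb z y1 y2 t) = 0, onorm (pcomb z y1 y2 t) = 0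
                & omul z (pcomb z y1 y2 t) = 0].
  rewrite pcombE otr_mk8 onorm_mk8 omul_mk8 mk8_0.
  by split; [ring | field | congr mk8; field].
split=> // [w tw zw | [al [be ga]] [al' [be' ga']]]; last first.
  rewrite !pcombE => /mk8_inj [_ /= E1 _ _ [_ E5 E6 _]].
  have Eal : al = al' by apply: (cancel_u1 1%N); rewrite !expr1.
  rewrite Eal in E5 E6; move/addrI: E6 => /cancel_u1 ->.
  by move/addrI/oppr_inj: E5 => /cancel_u1 ->; rewrite Eal.
pose al := oc w 1 / u1.
exists (al, ((oc w 6 - al * v3) / u1 ^+ 2, (al * v2 - oc w 5) / u1 ^+ 2)).
have [t_null _ z_null] := null (al, ((oc w 6 - al * v3) / u1 ^+ 2, (al * v2 - oc w 5) / u1 ^+ 2)).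
apply/eqP; rewrite -subr_eq0; apply/eqP.
apply: (annihilator_u1_eq0 (z := z)); first by rewrite oc_mk8.
- by rewrite otrB tw t_null subr0.
- by rewrite omulBr zw z_null subr0.
all: by rewrite ocB pcombE oc_mk8 //= /al; field.
Qed.

Lemma pencil_u1_Qpt z : Qpt z -> oc z 1 != 0 -> exists y1 y2, pencil z y1 y2.
Proof.
move=> /and3P [_ /eqP/otr_eq0 z7 /eqP nz] u1_neq0.
suff -> : z = mk8 (oc z 0) (oc z 1) (oc z 2) (oc z 3)
    ((- oc z 0 ^+ 2 - oc z 2 * oc z 5 - oc z 3 * oc z 6) / oc z 1) (oc z 5) (oc z 6) (- oc z 0).
  exact: pencil_u1.
rewrite {1}[z]mk8_oc z7; congr mk8; apply: (mulIf u1_neq0); rewrite mulfVK //.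
by rewrite -[LHS]addr0 -nz /onorm z7; ring.
Qed.

Definition oct_aut (phi psi : 'rV[L]_8 -> 'rV[L]_8) : Prop :=
  [/\ forall a b x y, phi (a *: x + b *: y) = a *: phi x + b *: phi y,
      forall x y, phi (omul x y) = omul (phi x) (phi y),
      forall x, otr (phi x) = otr x /\ onorm (phi x) = onorm x,
      cancel phi psi & cancel psi phi].

Section Transport.
Variables phi psi : 'rV[L]_8 -> 'rV[L]_8.
Hypothesis phi_aut : oct_aut phi psi.

Let phi_inj : injective phi.
Proof. by case: phi_aut => _ _ _ /can_inj. Qed.

Let phi0 : phi 0 = 0.
Proof. by case: phi_aut => phi_lin _ _ _ _; move: (phi_lin 0 0 0 0); rewrite !scale0r !addr0. Qed.

Let phi_pcomb z y1 y2 t : phi (pcomb z (psi y1) (psi y2) t) = pcomb (phi z) y1 y2 t.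
Proof.
case: phi_aut => phi_lin _ _ _ psiK.
by rewrite /pcomb -[t.1 *: z + _]scale1r phi_lin phi_lin !psiK scale1r.
Qed.

Lemma Qpt_aut z : Qpt z -> Qpt (phi z).
Proof.
case: phi_aut => _ _ phi_tr_norm _ _ /and3P [z_neq0 tz nz].
rewrite /Qpt; have [-> ->] := phi_tr_norm z; rewrite tz nz /= andbT.
by apply: contra z_neq0 => /eqP phiz0; apply/eqP/phi_inj; rewrite phiz0 phi0.
Qed.

Lemma pencil_aut z : (exists y1 y2, pencil (phi z) y1 y2) -> exists y1 y2, pencil z y1 y2.
Proof.
case: phi_aut => _ phiM phi_tr_norm _ _ [y1 [y2 [null span inj]]].
exists (psi y1), (psi y2); split.
- move=> t; have [tp np zp] := null t; have [<- <-] := phi_tr_norm (pcomb z (psi y1) (psi y2) t).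
  by rewrite phi_pcomb tp np; split=> //; apply: phi_inj; rewrite phiM phi_pcomb zp phi0.
- move=> w tw zw; have [tpw _] := phi_tr_norm w.
  have zpw : omul (phi z) (phi w) = 0 by rewrite -phiM zw phi0.
  have [t Ew] := span (phi w) (etrans tpw tw) zpw.
  by exists t; apply: phi_inj; rewrite phi_pcomb.
by move=> t t' /(congr1 phi); rewrite !phi_pcomb => /inj.
Qed.

End Transport.

(* Elements of G2 moving any point of Q to one with u_1 != 0. *)
Definition cyc x := mk8 (oc x 0) (oc x 2) (oc x 3) (oc x 1) (oc x 5) (oc x 6) (oc x 4) (oc x 7).
Definition cycV x := mk8 (oc x 0) (oc x 3) (oc x 1) (oc x 2) (oc x 6) (oc x 4) (oc x 5) (oc x 7).
Definition dual x :=
  mk8 (oc x 7) (- oc x 4) (- oc x 5) (- oc x 6) (- oc x 1) (- oc x 2) (- oc x 3) (oc x 0).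

Lemma oct_aut_cyc : oct_aut cyc cycV.
Proof.
rewrite /cyc /cycV; split=> [a b x y | x y | x | x | x].
- by rewrite !oc_linear !scale_mk8 add_mk8.
- by rewrite [x]mk8_oc [y]mk8_oc omul_mk8 !oc_mk8 //= omul_mk8; congr mk8; ring.
- by rewrite otr_mk8 onorm_mk8 /otr /onorm; split; ring.
- by rewrite !oc_mk8 //= -mk8_oc.
- by rewrite !oc_mk8 //= -mk8_oc.
Qed.

Lemma oct_aut_dual : oct_aut dual dual.
Proof.
rewrite /dual; split=> [a b x y | x y | x | x | x].
- by rewrite !oc_linear !scale_mk8 add_mk8; congr mk8; ring.
- by rewrite [x]mk8_oc [y]mk8_oc omul_mk8 !oc_mk8 //= omul_mk8; congr mk8; ring.
- by rewrite otr_mk8 onorm_mk8 /otr /onorm; split; ring.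
- by rewrite !oc_mk8 //= !opprK -mk8_oc.
- by rewrite !oc_mk8 //= !opprK -mk8_oc.
Qed.

Lemma pencil_u_Qpt z : Qpt z -> [|| oc z 1 != 0, oc z 2 != 0 | oc z 3 != 0] ->
  exists y1 y2, pencil z y1 y2.
Proof.
move=> Qz /or3P [u1_neq0 | u2_neq0 | u3_neq0]; first exact: pencil_u1_Qpt.
  apply: (pencil_aut oct_aut_cyc); apply: pencil_u1_Qpt; first exact: (Qpt_aut oct_aut_cyc).
  by rewrite oc_mk8.
do 2 apply: (pencil_aut oct_aut_cyc); apply: pencil_u1_Qpt.
  by do 2 apply: (Qpt_aut oct_aut_cyc).
by rewrite !oc_mk8.
Qed.

Lemma pencil_exists z : Qpt z -> exists y1 y2, pencil z y1 y2.
Proof.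
move=> Qz; have [u_neq0|] := boolP [|| oc z 1 != 0, oc z 2 != 0 | oc z 3 != 0].
  exact: pencil_u_Qpt.
rewrite !negb_or !negbK => /and3P [/eqP u1 /eqP u2 /eqP u3].
have [v_neq0|] := boolP [|| oc z 4 != 0, oc z 5 != 0 | oc z 6 != 0].
  apply: (pencil_aut oct_aut_dual); apply: pencil_u_Qpt; first exact: (Qpt_aut oct_aut_dual).
  by rewrite !oc_mk8 //= !oppr_eq0.
rewrite !negb_or !negbK => /and3P [/eqP v1 /eqP v2 /eqP v3].
case/and3P: Qz => z_neq0 /eqP/otr_eq0 z7 /eqP.
rewrite /onorm u1 u2 u3 z7 => N0.
have : oc z 0 * oc z 0 == 0 by rewrite -oppr_eq0 -mulrN -N0; apply/eqP; ring.
rewrite mulf_eq0 orbb => /eqP z0.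
by case/negP: z_neq0; rewrite [z]mk8_oc u1 u2 u3 v1 v2 v3 z7 z0 oppr0 -mk8_0.
Qed.

End NullPencil.

Section SectionEval.
Variable L : finFieldType.
Variable c : 'I_8 -> 'I_8 -> 'I_8 -> L.
Implicit Types (a b d e : L) (x y z w : 'rV[L]_8).
Local Notation sec := (sec_eval c).

Lemma sec_eval_linear1 a b x y w1 w2 :
  sec (a *: x + b *: y) w1 w2 = a * sec x w1 w2 + b * sec y w1 w2.
Proof.
rewrite /sec_eval !mulr_sumr -big_split /=; apply: eq_bigr => i _.
rewrite !mulr_sumr -big_split /=; apply: eq_bigr => j _.
by rewrite !mulr_sumr -big_split /=; apply: eq_bigr => l _; rewrite !mxE; ring.
Qed.

Lemma sec_eval_linear2 a b x y w1 w2 :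
  sec w1 (a *: x + b *: y) w2 = a * sec w1 x w2 + b * sec w1 y w2.
Proof.
rewrite /sec_eval !mulr_sumr -big_split /=; apply: eq_bigr => i _.
rewrite !mulr_sumr -big_split /=; apply: eq_bigr => j _.
by rewrite !mulr_sumr -big_split /=; apply: eq_bigr => l _; rewrite !mxE; ring.
Qed.

Lemma sec_eval_linear3 a b x y w1 w2 :
  sec w1 w2 (a *: x + b *: y) = a * sec w1 w2 x + b * sec w1 w2 y.
Proof.
rewrite /sec_eval !mulr_sumr -big_split /=; apply: eq_bigr => i _.
rewrite !mulr_sumr -big_split /=; apply: eq_bigr => j _.
by rewrite !mulr_sumr -big_split /=; apply: eq_bigr => l _; rewrite !mxE; ring.
Qed.

Lemma sec_eval_alt x w : sec x w w = 0.
Proof.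
by rewrite /sec_eval big1 // => i _; rewrite big1 // => j _; rewrite big1 // => l _; ring.
Qed.

Lemma sec_eval_anti x w1 w2 : sec x w2 w1 = - sec x w1 w2.
Proof.
rewrite /sec_eval -sumrN; apply: eq_bigr => i _; rewrite -sumrN; apply: eq_bigr => j _.
by rewrite -sumrN; apply: eq_bigr => l _; ring.
Qed.

Lemma sec_eval_basis a b d e x r0 r1 :
  sec x (a *: r0 + b *: r1) (d *: r0 + e *: r1) = (a * e - b * d) * sec x r0 r1.
Proof.
by rewrite sec_eval_linear2 !sec_eval_linear3 !sec_eval_alt (sec_eval_anti x r0 r1); ring.
Qed.

Lemma sec_eval_pcomb z y1 y2 t :
  sec z z (pcomb z y1 y2 t) = t.2.1 * sec z z y1 + t.2.2 * sec z z y2.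
Proof.
rewrite /pcomb -[t.1 *: z + _]scale1r (sec_eval_linear3 1 t.2.2) sec_eval_linear3 sec_eval_alt.
by rewrite mulr0 add0r mul1r.
Qed.

End SectionEval.

Section PointFibres.
Variable L : finFieldType.
Implicit Types (x y z w : 'rV[L]_8).
Local Notation q := #|L|.

Lemma Gln_pencil z y1 y2 : pencil z y1 y2 ->
  [set w | Gln (mk2 z w)] = pcomb z y1 y2 @: [set t | t.2 != (0, 0)].
Proof.
move=> [null span inj]; have [tz nz _] := null (1, (0, 0)).
rewrite /pcomb /= scale1r !scale0r !addr0 in tz nz.
apply/setP => w; rewrite inE; apply/idP/imsetP => [/GlnE_norm [zw_indep _ tw [_ _ zw]] | [t]].
  have [t Ew] := span w tw zw; exists t => //; rewrite inE.
  apply/eqP => t2_0; have := zw_indep t.1 (-1).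
  rewrite Ew /pcomb t2_0 /= !scale0r !addr0 scaleN1r subrr => /(_ erefl) [_ /eqP].
  by rewrite oppr_eq0 oner_eq0.
case: t => t1 [t21 t22]; rewrite inE /= => t2_neq0 ->.
have [tp np zp] := null (t1, (t21, t22)).
apply/GlnE_norm; split=> // a b E.
have /inj [Ea Eb Eg] : pcomb z y1 y2 (a + b * t1, (b * t21, b * t22)) = pcomb z y1 y2 (0, (0, 0)).
  rewrite {2}/pcomb /= !scale0r !addr0 -E /pcomb /=.
  by rewrite !scalerDr !scalerA scalerDl !addrA.
have b0 : b = 0.
  apply: contraNeq t2_neq0 => b_neq0; move: Eb Eg => /eqP; rewrite mulf_eq0 (negPf b_neq0).
  by move=> /eqP -> /eqP; rewrite mulf_eq0 (negPf b_neq0) => /eqP ->.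
by split=> //; move: Ea; rewrite b0 mul0r addr0.
Qed.

Lemma card_pencil_kernel z y1 y2 (f : 'rV[L]_8 -> L) (s1 s2 : L) : pencil z y1 y2 ->
  (forall t, f (pcomb z y1 y2 t) = t.2.1 * s1 + t.2.2 * s2) ->
  #|[set w | Gln (mk2 z w) && (f w == 0)]| =
  (q * (q.-1 * (1 + q * ((s1 == 0) && (s2 == 0))%R)))%N.
Proof.
move=> P fE; have [_ _ inj] := P.
have -> : [set w | Gln (mk2 z w) && (f w == 0)] =
          pcomb z y1 y2 @: setX [set: L] (kernel2 s1 s2 :\ (0, 0)).
  apply/setP => w; move/setP/(_ w): (Gln_pencil P); rewrite !inE => ->.
  apply/andP/imsetP => [[/imsetP [t t2_neq0 ->]] | [t]].
    by rewrite fE => ft; exists t => //; rewrite !inE in t2_neq0 *; rewrite t2_neq0 ft.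
  rewrite !inE => /andP [_ /andP [t2_neq0 ft]] ->; rewrite fE ft; split=> //.
  by apply/imsetP; exists t; rewrite ?inE.
by rewrite card_imset // cardsX cardsT card_kernel2_nonzero.
Qed.

Lemma card_flags_at z : Qpt z -> #|[set w | Gln (mk2 z w)]| = (q * (q.-1 * (1 + q)))%N.
Proof.
move=> /pencil_exists [y1 [y2 P]].
have fE (t : L * (L * L)) : (0 : L) = t.2.1 * 0 + t.2.2 * 0 by rewrite !mulr0 addr0.
have := @card_pencil_kernel _ _ _ (fun _ => 0) 0 0 P fE.
rewrite (eq_card (B := [set w | Gln (mk2 z w)])) => [->|w]; last by rewrite !inE eqxx andbT.
by rewrite eqxx /= muln1.
Qed.

End PointFibres.

Section Counting.
Variable L : finFieldType.
Variable c : 'I_8 -> 'I_8 -> 'I_8 -> L.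
Implicit Types (x y z w : 'rV[L]_8) (A : 'M[L]_(2, 8)).
Local Notation sec := (sec_eval c).
Local Notation q := #|L|.

Lemma Gln_through z r0 r1 : Gln (mk2 r0 r1) -> (z <= mk2 r0 r1)%MS -> z != 0 ->
  exists2 w, Gln (mk2 z w) & (sec z z w == 0) = (sec z r0 r1 == 0).
Proof.
move=> G /submxP [D {z}->]; rewrite mulmx_mk2; set z := _ + _ => z_neq0.
have through d e : D 0 0 * e - D 0 1 * d != 0 ->
    exists2 w, Gln (mk2 z w) & (sec z z w == 0) = (sec z r0 r1 == 0).
  move=> det_neq0; exists (d *: r0 + e *: r1); first exact: Gln_comb.
  by rewrite sec_eval_basis mulf_eq0 (negPf det_neq0).
have [a0|a_neq0] := eqVneq (D 0 0) 0; last by apply: (through 0 1); rewrite mulr1 mulr0 subr0.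
apply: (through 1 0); rewrite a0 mul0r mulr1 sub0r oppr_eq0.
by apply: contra z_neq0 => /eqP b0; rewrite /z a0 b0 !scale0r addr0.
Qed.

Lemma XcondE z : Xcond c z <-> Qpt z /\ forall w, Gln (mk2 z w) -> sec z z w = 0.
Proof.
split=> [/andP [Qz /forallP Xz] | [Qz Xz]].
  split=> // w G; have := Xz (mk2 z w); rewrite G row0_mk2 row1_mk2 /=.
  by rewrite -{1}(row0_mk2 z w) row_sub => /eqP.
apply/andP; split=> //; apply/forallP => A; apply/implyP => /andP [GA zA].
move: GA zA; rewrite (mk2_rows A) row0_mk2 row1_mk2 => GA zA.
have [|w Gw <-] := Gln_through GA zA; first by case/and3P: Qz.
by rewrite Xz.
Qed.

Lemma card_incidences_at z : Qpt z ->
  #|[set w | Gln (mk2 z w) && (sec z z w == 0)]| = (q * (q.-1 * (1 + q * Xcond c z)))%N.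
Proof.
move=> Qz; have [y1 [y2 P]] := pencil_exists Qz.
rewrite (card_pencil_kernel P (sec_eval_pcomb c z y1 y2)).
have GlnP w : Gln (mk2 z w) <-> exists2 t, t.2 != (0, 0) & w = pcomb z y1 y2 t.
  move/setP/(_ w): (Gln_pencil P); rewrite inE => ->.
  split=> [/imsetP [t] | [t t2_neq0 ->]]; first by rewrite inE; exists t.
  by apply/imsetP; exists t; rewrite ?inE.
suff -> : Xcond c z = (sec z z y1 == 0) && (sec z z y2 == 0) by [].
apply/idP/andP => [/XcondE [_ Xz] | [/eqP s1 /eqP s2]].
  have sec_basis_vector t : t.2 != (0, 0) -> sec z z (pcomb z y1 y2 t) = 0.
    by move=> t2_neq0; apply: Xz; apply/GlnP; exists t.
  have ne10 : ((1, 0) : L * L) != (0, 0) by rewrite xpair_eqE oner_eq0.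
  have ne01 : ((0, 1) : L * L) != (0, 0) by rewrite xpair_eqE oner_eq0 andbF.
  move: (sec_basis_vector (0, (1, 0)) ne10) (sec_basis_vector (0, (0, 1)) ne01).
  by rewrite !sec_eval_pcomb /= !mul1r !mul0r addr0 add0r => -> ->.
apply/XcondE; split=> // w /GlnP [t _ ->].
by rewrite sec_eval_pcomb s1 s2 !mulr0 addr0.
Qed.

Definition Qvecs := [set z : 'rV[L]_8 | Qpt z].
Definition Xvecs := [set z : 'rV[L]_8 | Xcond c z].
Definition flag_bases := [set A : 'M[L]_(2, 8) | Gln A].
Definition Ybases := [set A : 'M[L]_(2, 8) | Ycond c A].
(* s at the flags (<row 0 A>, <A>) and (<row 1 A>, <A>). *)
Definition sec_row0 A := sec (row ord0 A) (row ord0 A) (row ord_max A).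
Definition sec_row1 A := sec (row ord_max A) (row ord0 A) (row ord_max A).
Definition incidences := [set A | Gln A && (sec_row0 A == 0)].

Lemma card_mk2 (P : pred 'M[L]_(2, 8)) :
  #|[set A | P A]| = (\sum_z #|[set w | P (mk2 z w)]|)%N.
Proof.
rewrite -(card_dep_pairs (fun z w => P (mk2 z w))).
have mk2_inj : injective (fun p : 'rV[L]_8 * 'rV[L]_8 => mk2 p.1 p.2).
  move=> [z w] [z' w'] /= E.
  by move: (congr1 (row ord0) E) (congr1 (row ord_max) E); rewrite !row0_mk2 !row1_mk2 => -> ->.
rewrite -(card_imset _ mk2_inj); apply: eq_card => A; rewrite inE.
apply/idP/imsetP => [PA | [[z w]]]; last by rewrite inE /= => + ->.
by exists (row ord0 A, row ord_max A); rewrite ?inE /= -mk2_rows.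
Qed.

Lemma Xvecs_sub : Xvecs \subset Qvecs.
Proof. by apply/subsetP => z; rewrite !inE => /andP []. Qed.

Lemma card_flag_bases : #|flag_bases| = (q * q.-1 * (#|Qvecs| + q * #|Qvecs|))%N.
Proof.
rewrite -sum_card_indicator // /flag_bases card_mk2 [RHS]big_mkcond /=.
apply: eq_bigr => z _; rewrite inE; have [Qz | nQz] := boolP (Qpt z).
  by rewrite card_flags_at //= muln1 mulnA.
apply/eqP; rewrite cards_eq0; apply/eqP/setP => w; rewrite !inE.
by apply/negP => /Gln_Qpt Qz; rewrite Qz in nQz.
Qed.

Lemma card_incidences : #|incidences| = (q * q.-1 * (#|Qvecs| + q * #|Xvecs|))%N.
Proof.
rewrite -sum_card_indicator ?Xvecs_sub // /incidences card_mk2 [RHS]big_mkcond /=.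
apply: eq_bigr => z _; rewrite inE.
rewrite (eq_card (B := [set w | Gln (mk2 z w) && (sec z z w == 0)])) => [|w]; last first.
  by rewrite !inE /sec_row0 row0_mk2 row1_mk2.
have [Qz | nQz] := boolP (Qpt z).
  by rewrite card_incidences_at // inE mulnA.
apply/eqP; rewrite cards_eq0; apply/eqP/setP => w; rewrite !inE.
by apply/negP => /andP [/Gln_Qpt Qz _]; rewrite Qz in nQz.
Qed.

Lemma sec_row0_mul (g : 'M[L]_2) A :
  sec_row0 (g *m A) = \det g * (g 0 0 * sec_row0 A + g 0 1 * sec_row1 A).
Proof.
by rewrite /sec_row0 /sec_row1 row0_mul2 row1_mul2 sec_eval_basis sec_eval_linear1 det_mx22.
Qed.

Lemma YcondE A : Ycond c A = [&& Gln A, sec_row0 A == 0 & sec_row1 A == 0].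
Proof.
apply/andP/and3P => [[GA /forallP YA] | [GA /eqP s0 /eqP s1]].
  have := GA; rewrite {1}(mk2_rows A) => /GlnE [indep _ _ _].
  move: (YA (row ord0 A)) (YA (row ord_max A)).
  by rewrite (indep2_neq0 indep) (indep2_neq0 (indep2_sym indep)) !row_sub.
split=> //; apply/forallP => x; apply/implyP => /andP [_ /submxP [D ->]].
rewrite {1}(mk2_rows A) mulmx_mk2 sec_eval_linear1 -/(sec_row0 A) -/(sec_row1 A).
by rewrite s0 s1 !mulr0 addr0.
Qed.

Lemma card_units_incidences A :
  #|[set g : 'M[L]_2 | (g \in unitmx) && (g *m A \in incidences)]| =
  if Gln A then (q * q.-1 * (q.-1 * (1 + q * Ycond c A)))%N else 0%N.
Proof.
have [GA | nGA] := boolP (Gln A).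
  rewrite (eq_card (B := [set g : 'M[L]_2 | (g \in unitmx) &&
                           (g 0 0 * sec_row0 A + g 0 1 * sec_row1 A == 0)])) => [|g].
    by rewrite card_GL2_first_row card_kernel2_nonzero YcondE GA.
  rewrite !inE sec_row0_mul; have [g_unit | //] := boolP (g \in unitmx).
  have det_neq0 : \det g != 0 by rewrite -unitfE -unitmxE.
  by rewrite Gln_mul_unit //= mulf_eq0 (negPf det_neq0).
apply/eqP; rewrite cards_eq0; apply/eqP/setP => g; rewrite !inE.
apply/negP => /andP [g_unit /andP [GgA _]].
have := @Gln_mul_unit _ (invmx g) (g *m A); rewrite unitmx_inv mulKmx // => /(_ g_unit GgA).
by rewrite (negPf nGA).
Qed.

Lemma card_incidences_lines : ((1 + q) * #|incidences| = #|flag_bases| + q * #|Ybases|)%N.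
Proof.
(* Count the pairs (A, g) with g A in [incidences] by A and by g. *)
have := sum_card_unit_translates incidences.
rewrite card_GL2 (eq_bigr _ (fun A _ => card_units_incidences A)) -big_mkcond /=.
have Ysub : Ybases \subset flag_bases by apply/subsetP => A; rewrite !inE YcondE => /andP [].
have -> : (\sum_(A | Gln A) q * q.-1 * (q.-1 * (1 + q * Ycond c A)) =
          \sum_(A in flag_bases) q * q.-1 * q.-1 * (1 + q * (A \in Ybases)))%N.
  by apply: eq_big => A; rewrite !inE // => _; rewrite mulnA.
rewrite sum_card_indicator // => E.
have q_gt1 := card_finNzRing_gt1 L.
have d_gt0 : (0 < q * q.-1 * q.-1)%N by rewrite !muln_gt0 -subn1 subn_gt0 q_gt1 ltnW.
by apply/eqP; rewrite -(eqn_pmul2l d_gt0) E; apply/eqP; ring.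
Qed.

Lemma Xcond_scale (g : 'M[L]_1) x : g \in unitmx -> Xcond c x -> Xcond c (g *m x).
Proof.
rewrite unitmxE det_mx11 unitfE => g_neq0; rewrite {1}[g]mx11_scalar mul_scalar_mx.
case/andP => /and3P [x_neq0 /eqP tx /eqP nx] /forallP Xx; apply/andP; split.
  by rewrite /Qpt scaler_eq0 negb_or g_neq0 x_neq0 otrZ onormZ tx nx !mulr0 eqxx.
apply/forallP => A; apply/implyP => /andP [GA]; rewrite eqmx_scale // => xA.
move: (Xx A); rewrite GA xA /= => /eqP sx.
by rewrite -[_ *: x]addr0 -(scale0r x) sec_eval_linear1 sx !mulr0 addr0.
Qed.

Lemma Ycond_mul_unit (g : 'M[L]_2) A : g \in unitmx -> Ycond c A -> Ycond c (g *m A).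
Proof.
move=> g_unit /andP [GA /forallP YA]; rewrite /Ycond Gln_mul_unit //=.
apply/forallP => x; apply/implyP => /andP [x_neq0 xgA].
have xA := submx_trans xgA (submxMl g A).
move: (YA x); rewrite x_neq0 xA /= => /eqP s0.
by rewrite row0_mul2 row1_mul2 sec_eval_basis s0 mulr0.
Qed.

Lemma card_Xvecs : #|Xvecs| = (q.-1 * #|Xpts c|)%N.
Proof.
rewrite /Xvecs (card_row_free_GL_stable (P := Xcond c)) ?card_GL1 // => [x | x g].
  by case/andP => /and3P [x_neq0 _ _] _; rewrite /row_free rank_rV x_neq0.
by move=> g_unit; apply: Xcond_scale.
Qed.

Lemma card_Ybases : #|Ybases| = (q * q.-1 * (q.-1 * (1 + q)) * #|Ypts c|)%N.
Proof.
rewrite /Ybases (card_row_free_GL_stable (P := Ycond c)) ?card_GL2 // => [A | A g].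
  by case/andP => /and5P [].
by move=> g_unit; apply: Ycond_mul_unit.
Qed.

Lemma card_Ybases_Xvecs : #|Ybases| = (q * q.-1 * (1 + q) * #|Xvecs|)%N.
Proof.
have := card_incidences_lines; rewrite card_incidences card_flag_bases => E.
have q_gt0 : (0 < q)%N by apply/card_gt0P; exists 0.
apply/eqP; rewrite -(eqn_pmul2l q_gt0) -(eqn_add2l (q * q.-1 * (#|Qvecs| + q * #|Qvecs|))).
by rewrite -E; apply/eqP; ring.
Qed.

Lemma card_Xpts_Ypts : #|Xpts c| = #|Ypts c|.
Proof.
have := card_Ybases_Xvecs; rewrite card_Ybases card_Xvecs => E.
have q_gt1 := card_finNzRing_gt1 L.
have GL2_gt0 : (0 < q * q.-1 * (q.-1 * (1 + q)))%N.
  by rewrite !muln_gt0 -subn1 subn_gt0 q_gt1 ltnW.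
apply/eqP; rewrite -(eqn_pmul2l GL2_gt0) E; apply/eqP; ring.
Qed.

End Counting.

Theorem corollary4p1 (k : finFieldType) (c : 'I_8 -> 'I_8 -> 'I_8 -> k) :
  same_zeta
    (fun L f => #|Xpts (fun i j l => f (c i j l))|)
    (fun L f => #|Ypts (fun i j l => f (c i j l))|).
Proof. by move=> L f; apply: card_Xpts_Ypts. Qed.
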